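(* Let $G$ be a finite simple graph without isolated vertices and let $f=(V_0,V_1,V_2)$ be a $\gamma_{tR}(G)$-function. Then $\gamma_{tR}(G)\ge |V(G)|-(\Delta(G)-2)|V_2|$ and $|V_2|\ge \frac{|V(G)|-|V_1|}{\Delta(G)}$. Moreover, if in addition $|V(G)|=\Delta(G)|V_2|+|V_1|$, then $\gamma_{tR}(G)=|V(G)|-(\Delta(G)-2)|V_2|$.
   Context: $\Delta(G)$ denotes the maximum degree of $G$. A total Roman dominating function on $G$ is a map $f:V(G)\to\{0,1,2\}$, written $f=(V_0,V_1,V_2)$ with $V_i=\{v:f(v)=i\}$, such that every vertex of $V_0$ has a neighbor in $V_2$ and the subgraph induced by $V_1\cup V_2$ has no isolated vertices; $\gamma_{tR}(G)$ is the minimum of $\sum_v f(v)$ over such $f$, and a $\gamma_{tR}(G)$-function is one attaining this minimum. *)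

From mathcomp Require Import all_boot all_order all_algebra.
Set Implicit Arguments. Unset Strict Implicit. Unset Printing Implicit Defensive.

Definition simple_graph (T : finType) (e : rel T) : Prop :=
  symmetric e /\ irreflexive e.

Definition no_isolated (T : finType) (e : rel T) : Prop :=
  forall v : T, exists u : T, e v u.

Definition deg (T : finType) (e : rel T) (v : T) : nat := #|[set u | e v u]|.

Definition maxdeg (T : finType) (e : rel T) : nat := \max_(v : T) deg e v.

Definition Vset (T : finType) (f : T -> nat) (i : nat) : {set T} :=
  [set v | f v == i].

Definition weight (T : finType) (f : T -> nat) : nat := \sum_(v : T) f v.

Definition is_TRDF (T : finType) (e : rel T) (f : T -> nat) : Prop :=
  (forall v, f v <= 2) /\
  (forall v, f v = 0 -> exists u, e v u /\ f u = 2) /\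
  (forall v, 0 < f v -> exists u, e v u /\ 0 < f u).

(* a gamma_tR(G)-function: a TRDF of minimum weight; its weight is gamma_tR(G) *)
Definition is_gtR_function (T : finType) (e : rel T) (f : T -> nat) : Prop :=
  is_TRDF e f /\ forall g : T -> nat, is_TRDF e g -> weight f <= weight g.

From mathcomp Require Import all_boot all_order all_algebra.
From mathcomp Require Import lra.
Import Order.TTheory GRing.Theory Num.Theory.

Set Implicit Arguments.
Unset Strict Implicit.
Unset Printing Implicit Defensive.

(* Every vertex of V_0 has a neighbour in V_2, while every w in V_2 has a
   neighbour outside V_0 (total domination), so w has at most Delta - 1
   neighbours in V_0.  Double counting the V_0-V_2 edges gives
   |V_0| <= (Delta - 1) |V_2|, i.e. n - |V_1| <= Delta |V_2|; with
   weight f = |V_1| + 2 |V_2| and n = |V_0| + |V_1| + |V_2| all three claims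
   are linear consequences. *)

Section LabelClasses.

Variables (T : finType) (f : T -> nat).
Hypothesis f_le2 : forall v, f v <= 2.

Lemma card_Vset i : #|Vset f i| = \sum_(v : T) (f v == i : nat).
Proof.
rewrite -sum1_card big_mkcond /=; apply: eq_bigr => v _.
by rewrite inE; case: (f v == i).
Qed.

Lemma weight_Vset : weight f = #|Vset f 1| + 2 * #|Vset f 2|.
Proof.
rewrite !card_Vset big_distrr -big_split /=; apply: eq_bigr => v _.
by move: (f_le2 v); case: (f v) => [|[|[|]]].
Qed.

Lemma card_Vset012 : #|T| = #|Vset f 0| + #|Vset f 1| + #|Vset f 2|.
Proof.
rewrite !card_Vset -!big_split /= -sum1_card; apply: eq_bigr => v _.
by move: (f_le2 v); case: (f v) => [|[|[|]]].
Qed.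

End LabelClasses.

Lemma deg_le_maxdeg (T : finType) (e : rel T) (v : T) : deg e v <= maxdeg e.
Proof. exact: (leq_bigmax v). Qed.

Section TotalRomanDomination.

Variables (T : finType) (e : rel T) (f : T -> nat).
Hypotheses (e_sym : symmetric e) (f_TRDF : is_TRDF e f).

Local Notation V0 := (Vset f 0).
Local Notation V2 := (Vset f 2).

Lemma card_V0_le_sum_nbhd_V2 : #|V0| <= \sum_(w in V2) #|[set v in V0 | e w v]|.
Proof.
have [_ [f0_dom _]] := f_TRDF.
have V0_le_edges : #|V0| <= \sum_(v in V0) \sum_(w in V2) (e v w : nat).
  rewrite -sum1_card; apply: leq_sum => v; rewrite inE => /eqP /f0_dom [u [evu fu]].
  by rewrite (bigD1 u) ?inE ?fu //= evu.
apply: (leq_trans V0_le_edges); rewrite exchange_big; apply: leq_sum => w _.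
rewrite -sum1_card big_mkcond [X in _ <= X]big_mkcond /=.
by apply/eq_leq/eq_bigr => v _; rewrite e_sym !inE; case: (f v == 0); case: (e w v).
Qed.

Lemma card_nbhd_V0_lt_maxdeg w : w \in V2 -> #|[set v in V0 | e w v]| < maxdeg e.
Proof.
rewrite inE => /eqP fw; have [_ [_ fpos_dom]] := f_TRDF.
have [u [ewu fu]] : exists u, e w u /\ 0 < f u by apply: fpos_dom; rewrite fw.
apply: leq_trans (deg_le_maxdeg e w).
rewrite /deg (cardsD1 u [set v | e w v]) inE ewu add1n ltnS.
apply/subset_leq_card/subsetP => v; rewrite !inE => /andP [/eqP fv ->].
by rewrite andbT; apply: contraTneq fu => <-; rewrite fv.
Qed.

Lemma card_V0_V2_le_maxdeg : #|V0| + #|V2| <= maxdeg e * #|V2|.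
Proof.
rewrite mulnC -sum_nat_const.
apply: leq_trans (leq_add card_V0_le_sum_nbhd_V2 (leqnn #|V2|)) _.
rewrite -[#|V2|]sum1_card -big_split; apply: leq_sum => w.
by move/card_nbhd_V0_lt_maxdeg; rewrite /= addn1.
Qed.

End TotalRomanDomination.

Theorem theorem4p1 (T : finType) (e : rel T) (f : T -> nat) :
  simple_graph e -> no_isolated e -> is_gtR_function e f ->
  let n := #|T| in
  let D := maxdeg e in
  let n1 := #|Vset f 1| in
  let n2 := #|Vset f 2| in
  [/\ ((weight f)%:Q >= n%:Q - (D%:Q - 2) * n2%:Q)%R,
      (n2%:Q >= (n%:Q - n1%:Q) / D%:Q)%R
    & n = D * n2 + n1 -> ((weight f)%:Q = n%:Q - (D%:Q - 2) * n2%:Q)%R].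
Proof.
move=> [e_sym _] _ [f_TRDF _] n D n1 n2; have [f_le2 _] := f_TRDF.
have V02_le : (#|Vset f 0|%:R + n2%:R <= D%:R * n2%:R :> rat)%R.
  by rewrite -natrD -natrM ler_nat card_V0_V2_le_maxdeg.
have n_eq : (n%:R = #|Vset f 0|%:R + n1%:R + n2%:R :> rat)%R.
  by rewrite /n (card_Vset012 f_le2) !natrD.
have weight_eq : ((weight f)%:R = n1%:R + 2 * n2%:R :> rat)%R.
  by rewrite (weight_Vset f_le2) natrD natrM.
rewrite !pmulrn; split.
- lra.
- have [->|D_gt0] := posnP D; first by rewrite invr0 mulr0 ler0n.
  rewrite ler_pdivrMr ?ltr0n //; lra.
- move=> n_eqD; have n_eqDQ : (n%:R = D%:R * n2%:R + n1%:R :> rat)%R.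
    by rewrite n_eqD natrD natrM.
  lra.
Qed.
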